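(* Let $I$ be an infinite set of positive integers and for $i \in I$ let $G_i$ be a finite group and $H_i \le G_i$ a subgroup, with $|G_i| \to \infty$. Assume $|H_i|$ is superpolylogarithmic: for every constant $c>0$, $|H_i| \ge (\log|G_i|)^{c}$ for all sufficiently large $i \in I$. Let $X_i$ be the set of right cosets of $H_i$ in $G_i$ and $r_i$ the number of orbits of $H_i$ on $X_i$. (a) If there is a constant $c_0>0$ such that the average subdegree satisfies $|X_i|/r_i \le (\log|G_i|)^{c_0}$ for all sufficiently large $i \in I$, then the family $(G_i,H_i)_{i\in I}$ is distinguishable. (b) In particular, if there is a constant $c_0>0$ such that $|H_i : H_i \cap gH_ig^{-1}| \le (\log|G_i|)^{c_0}$ for all $g \in G_i$ and all sufficiently large $i \in I$, then the family $(G_i,H_i)_{i\in I}$ is distinguishable.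
   Context: For a finite group $G$, let $\mathrm{Irr}(G)$ be its set of complex irreducible characters and $d_\chi=\chi(e)$. For $H \le G$ let $D_H = \frac{1}{|G|}\sum_{\chi \in \mathrm{Irr}(G)} d_\chi \big|\sum_{h \in H, h \neq e}\chi(h)\big|$ (the $L_1$ distance between the distributions $P_H(\chi)=\frac{d_\chi}{|G|}\sum_{h\in H}\chi(h)$ and $P_{\{e\}}$ on $\mathrm{Irr}(G)$ produced by weak quantum Fourier sampling). A family $(G_i,H_i)_{i \in I}$ with $H_i \le G_i$, $I$ an infinite set of positive integers and $|G_i| \to \infty$, is called distinguishable if there is a constant $c>0$ such that $D_{H_i} \ge (\log|G_i|)^{-c}$ for all sufficiently large $i \in I$, and indistinguishable otherwise. $G$ acts on the set $X = G/H$ of right cosets of $H$ by right multiplication; the suborbits are the orbits of $H$ on $X$, the subdegrees are their sizes, and the rank $r_X(G)$ is the number of suborbits, so the average subdegree is $|G:H|/r_X(G)$. *)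

From HB Require Import structures.
From mathcomp Require Import all_boot all_order all_algebra all_fingroup all_solvable all_field all_character.
From mathcomp Require Import classical_sets reals exp.
Set Implicit Arguments. Unset Strict Implicit. Unset Printing Implicit Defensive.
Import Order.TTheory GRing.Theory Num.Theory.
Local Open Scope ring_scope.

Definition algC_to_real (R : realType) (z : algC) : R :=
  sup [set (ratr q : R) | q in [set q : rat | (ratr q : algC) <= 'Re z]%classic].

Definition DH (gT : finGroupType) (G H : {group gT}) : algC :=
  (#|G|%:R)^-1 * \sum_(i < Nirr G)
     'chi[G]_i 1%g * `| \sum_(h in H | h != 1%g) 'chi[G]_i h |.

Definition cosetsX (gT : finGroupType) (G H : {group gT}) := rcosets H G.
Definition rankX (gT : finGroupType) (G H : {group gT}) : nat :=
  #|[set orbit 'Rs H Hx | Hx in rcosets H G]|.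

Definition eventually_in (I : nat -> Prop) (P : nat -> Prop) : Prop :=
  exists N : nat, forall i, I i -> (N <= i)%N -> P i.

Definition distinguishable (R : realType) (I : nat -> Prop)
    (gT : nat -> finGroupType) (G H : forall i, {group gT i}) : Prop :=
  exists c : R, 0 < c /\
    eventually_in I (fun i =>
      (ln (#|G i|%:R : R)) `^ (- c) <= algC_to_real R (DH (G i) (H i))).

From HB Require Import structures.
From mathcomp Require Import all_boot all_order all_algebra all_fingroup all_solvable all_field all_character.
From mathcomp Require Import classical_sets reals exp sequences.
From mathcomp Require Import ring lra.
Set Implicit Arguments.
Unset Strict Implicit.
Unset Printing Implicit Defensive.

Import Order.TTheory GRing.Theory Num.Theory.
Local Open Scope ring_scope.

(* Let theta = 'Ind[G] 1 be the permutation character of G on the right cosets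
   X of H and m_chi = '[theta, chi] its multiplicities.  Then
   0 <= m_chi <= chi(1), sum_chi m_chi chi(1) = theta(1) = |X|, and by the
   Frobenius-Cauchy orbit count sum_chi m_chi^2 = '[theta] = r.  As
   sum_(h in H, h != 1) chi(h) = |H| m_chi - chi(1), termwise
   m_chi (|H| m_chi - chi(1)) <= chi(1) |sum_(h != 1) chi(h)|, so that
   |G| D_H >= |H| r - |X|, i.e. D_H >= r / |X| - 1 / |H|.  The hypotheses give
   r / |X| >= (ln |G|)^-c0 and 1 / |H| <= (ln |G|)^-(c0 + 1), hence
   D_H >= (ln |G|)^-(c0 + 1) once ln |G| >= 2.  For (b), the suborbit of H x
   has size |H : H :&: H^x|, so |X| <= r max_g |H : H :&: H^g|. *)

Section RightCosetAction.

Variables (gT : finGroupType) (G H : {group gT}).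
Hypothesis sHG : H \subset G.

Local Open Scope group_scope.

Lemma actsRs_rcosets_sub : [acts H, on rcosets H G | 'Rs].
Proof. exact: fintype.subset_trans sHG (actsRs_rcosets H G). Qed.

Lemma rcoset_afixRs (g x : gT) : (H :* x \in 'Fix_'Rs[g]) = (g ^ x^-1 \in H).
Proof.
rewrite conjgE invgK mulgA -mem_rcoset.
by apply/afix1P/idP; rewrite /= rcosetE -rcosetM => /rcoset_eqP.
Qed.

Lemma sum_rcosets (F : {set gT} -> nat) :
  \sum_(y in G) F (H :* y) = (#|H| * \sum_(C in rcosets H G) F C)%N.
Proof.
rewrite (partition_big_imset (rcoset H)) big_distrr /=.
apply: eq_bigr => _ /imsetP[x Gx ->]; rewrite rcosetE.
rewrite (eq_bigr (fun=> F (H :* x))) => [|y /andP[_]]; last first.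
  by rewrite !rcosetE => /eqP ->.
rewrite sum_nat_const -(card_rcoset H x); congr (_ * _)%N.
apply: eq_card => y; rewrite unfold_in /= !rcosetE.
apply/andP/idP => [[_ /eqP <-]|Hxy]; first exact: rcoset_refl.
split; last by apply/eqP/rcoset_eqP.
by rewrite -(mulgKV x y) groupM // (fintype.subsetP sHG) -?mem_rcoset.
Qed.

Lemma card_orbit_rcoset x : #|orbit 'Rs H (H :* x)| = #|H : H :&: H :^ x|.
Proof.
rewrite card_orbit; congr #|_ : _|; apply/finset.setP => h.
rewrite !finset.in_setI.
apply/andb_id2l => Hh; rewrite mem_conjg -rcoset_afixRs.
by rewrite finset.in_setT /= !inE !finset.sub1set !inE.
Qed.

Lemma rankX_gt0 : (0 < rankX G H)%N.
Proof.
apply/card_gt0P; exists (orbit 'Rs H (H :* 1)); apply: imset_f.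
by rewrite mem_rcosets mulSGid.
Qed.

End RightCosetAction.

Section PermutationCharacter.

Variables (gT : finGroupType) (G H : {group gT}).
Hypothesis sHG : H \subset G.

Lemma cfInd1_afix (g : gT) :
  'Ind[G] (1 : 'CF(H)) g = #|('Fix_(rcosets H G | 'Rs)[g])%g|%:R.
Proof.
rewrite cfIndE // (eq_bigr (fun y => (((g ^ y)%g \in H) : nat)%:R)); last first.
  by move=> y _; rewrite cfun1E.
rewrite -natr_sum (reindex_inj invg_inj) /= (eq_bigl [in G]); last first.
  by move=> y; rewrite groupV.
rewrite (eq_bigr (fun y => (H :* y \in 'Fix_'Rs[g])%g : nat)); last first.
  by move=> y _; rewrite rcoset_afixRs.
rewrite (sum_rcosets sHG (fun C => (C \in 'Fix_'Rs[g])%g : nat)).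
rewrite -big_mkcondr sum1_card natrM mulKf ?neq0CG //.
by congr (_%:R); apply: eq_card => C; rewrite inE.
Qed.

Let theta := 'Ind[G] (1 : 'CF(H)).
Let mult (i : Iirr G) := '[theta, 'chi_i].

Lemma cfdot_Res_cfun1 (phi : 'CF(G)) :
  '['Res[H] phi, 1]_H = #|H|%:R^-1 * \sum_(h in H) phi h.
Proof.
rewrite cfdotE; congr (_ * _); apply: eq_bigr => h Hh.
by rewrite cfResE // cfun1E Hh conjC1 mulr1.
Qed.

Lemma cfnorm_Ind_cfun1_rank : '[theta] = (rankX G H)%:R.
Proof.
rewrite {2}/theta -cfdot_Res_l cfdot_Res_cfun1.
rewrite (eq_bigr _ (fun h _ => cfInd1_afix h)) -natr_sum.
by rewrite Frobenius_Cauchy ?actsRs_rcosets_sub // natrM mulrC mulfK ?neq0CG.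
Qed.

Lemma mult_nat i : mult i \in Num.nat.
Proof. by rewrite Cnat_cfdot_char ?irr_char ?cfInd_char ?cfun1_char. Qed.

Lemma mult_Res i : mult i = '['Res[H] 'chi_i, 1]_H.
Proof. by rewrite cfdot_Res_l cfdotC conj_natr ?mult_nat. Qed.

Lemma mult_le_irr1 i : mult i <= 'chi_i 1%g.
Proof.
rewrite -(ger0_norm (natr_ge0 (mult_nat i))) mult_Res cfdot_Res_cfun1.
rewrite normrM ger0_norm ?invr_ge0 ?ler0n // mulrC ler_pdivrMr ?gt0CG //.
rewrite mulrC mulr_natl -sumr_const; apply: le_trans (ler_norm_sum _ _ _) _.
by apply: ler_sum => h _; apply: char1_ge_norm (irr_char i).
Qed.

Lemma sum_mult_irr1 : \sum_i mult i * 'chi_i 1%g = #|G : H|%g%:R.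
Proof.
have theta1 : theta 1%g = #|G : H|%g%:R.
  by rewrite cfInd1 // cfun1E group1 mulr1.
rewrite -theta1 [in RHS](cfun_sum_cfdot theta) sum_cfunE.
by apply: eq_bigr => i _; rewrite cfunE.
Qed.

Lemma sum_mult_sqr : \sum_i mult i ^+ 2 = (rankX G H)%:R.
Proof.
rewrite -cfnorm_Ind_cfun1_rank cfdot_sum_irr.
by apply: eq_bigr => i _; rewrite conj_natr ?mult_nat // expr2.
Qed.

Lemma sum_irr_nontrivial i :
  \sum_(h in H | h != 1%g) 'chi_i h = #|H|%:R * mult i - 'chi_i 1%g.
Proof.
rewrite mult_Res cfdot_Res_cfun1 mulVKf ?neq0CG //.
by rewrite [in RHS](bigD1 1%g) //= addrC addrK.
Qed.

Lemma DH_ge_rank_index :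
  (rankX G H)%:R / #|G : H|%g%:R - #|H|%:R^-1 <= DH G H.
Proof.
have termwise i : mult i * (#|H|%:R * mult i - 'chi_i 1%g)
    <= 'chi_i 1%g * `|\sum_(h in H | h != 1%g) 'chi_i h|.
  have mult_ge0 : 0 <= mult i by apply: natr_ge0; apply: mult_nat.
  have real_sum : \sum_(h in H | h != 1%g) 'chi_i h \is Num.real.
    rewrite sum_irr_nontrivial; apply: realB.
      by apply: realM; [apply: realn | apply: ger0_real].
    exact: ger0_real (ltW (irr1_gt0 i)).
  rewrite -sum_irr_nontrivial.
  apply: le_trans (ler_wpM2l mult_ge0 (real_ler_norm real_sum)) _.
  by rewrite ler_wpM2r ?normr_ge0 ?mult_le_irr1.
have sum_eq : \sum_i mult i * (#|H|%:R * mult i - 'chi_i 1%g)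
    = #|H|%:R * (rankX G H)%:R - #|G : H|%g%:R.
  rewrite -sum_mult_sqr -sum_mult_irr1 mulr_sumr -sumrB.
  by apply: eq_bigr => i _; rewrite mulrBr mulrCA expr2.
have nzH : #|H|%:R != 0 :> algC by apply: neq0CG.
have nzGH : #|G : H|%g%:R != 0 :> algC by rewrite pnatr_eq0 -lt0n indexg_gt0.
rewrite [leLHS](_ : _ =
    #|G|%:R^-1 * (#|H|%:R * (rankX G H)%:R - #|G : H|%g%:R)).
  by rewrite /DH -sum_eq ler_wpM2l ?invr_ge0 ?ler0n //; apply: ler_sum.
by rewrite -(Lagrange sHG) natrM; field; apply/andP.
Qed.

End PermutationCharacter.

Section Subdegrees.

Variables (gT : finGroupType) (G H : {group gT}).
Hypothesis sHG : H \subset G.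

Lemma index_le_rankX_mul (R : numDomainType) (B : R) :
  (forall g, g \in G -> #|H : H :&: H :^ g^-1|%g%:R <= B) ->
  #|G : H|%g%:R <= (rankX G H)%:R * B.
Proof.
move=> bound_stab; have orbitsX := orbit_partition (actsRs_rcosets_sub sHG).
rewrite /indexg (card_partition orbitsX) natr_sum mulr_natl -sumr_const.
apply: ler_sum => _ /imsetP[_ /imsetP[x Gx ->] ->].
by rewrite rcosetE card_orbit_rcoset -[x]invgK bound_stab ?groupV.
Qed.

Lemma avg_subdegree_le (R : realFieldType) (B : R) :
  (forall g, g \in G -> #|H : H :&: H :^ g^-1|%g%:R <= B) ->
  #|cosetsX G H|%:R / (rankX G H)%:R <= B.
Proof.
move=> bound_stab; rewrite ler_pdivrMr ?ltr0n ?rankX_gt0 // mulrC.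
exact: index_le_rankX_mul.
Qed.

End Subdegrees.

Lemma ratr_le_algC_to_real (R : realType) (z : algC) (q : rat) :
  (ratr q : algC) <= z -> (ratr q : R) <= algC_to_real R z.
Proof.
move=> qz.
have z_real : z \is Num.real.
  rewrite -[z](subrK (ratr q)) realD //; first by rewrite ger0_real // subr_ge0.
  by rewrite realE ler0q lerq0 le_total.
have Rez : 'Re z = z by apply/Creal_ReP.
rewrite /algC_to_real.
apply: sup_upper_bound; last by exists q; rewrite //= Rez.
split; first by exists (ratr q); exists q; rewrite //= Rez.
exists (Num.bound `|z|)%:R => _ [q' /= q'z <-].
rewrite -(ratr_nat R) ler_rat -(ler_rat algC) ratr_nat.
rewrite Rez in q'z; apply: le_trans q'z _.
exact: le_trans (real_ler_norm z_real) (ltW (archi_boundP (normr_ge0 z))).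
Qed.

Lemma powRN_le_ratio_sub_inv (R : realType) (L c X r h : R) :
  2 <= L -> 0 < X -> 0 < r -> X / r <= L `^ c -> L `^ (c + 1) <= h ->
  L `^ (- (c + 1)) <= r / X - h^-1.
Proof.
move=> L_ge2 X_gt0 r_gt0 ratio_le h_ge.
have L_gt0 : 0 < L by apply: lt_le_trans L_ge2.
have Lc_gt0 : 0 < L `^ c by apply: powR_gt0.
have Lc1 : L `^ (c + 1) = L `^ c * L.
  by rewrite powRD ?powRr1 ?ltW // (gt_eqF L_gt0) implybT.
rewrite powRN Lc1; rewrite Lc1 in h_ge.
have ratio_ge : (L `^ c)^-1 <= r / X.
  by rewrite -invf_div lef_pV2 ?posrE ?divr_gt0.
have inv_le : h^-1 <= (L `^ c * L)^-1.
  by rewrite lef_pV2 ?posrE ?mulr_gt0 // (lt_le_trans _ h_ge) ?mulr_gt0.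
have halve : 2 * (L `^ c * L)^-1 <= (L `^ c)^-1.
  rewrite invfM mulrCA ler_piMr ?invr_ge0 ?(ltW Lc_gt0) //.
  by rewrite ler_pdivrMr // mul1r.
lra.
Qed.

Lemma eventually_in_and (I P Q : nat -> Prop) :
  eventually_in I P -> eventually_in I Q ->
  eventually_in I (fun i => P i /\ Q i).
Proof.
move=> [M P_after] [N Q_after]; exists (maxn M N) => i Ii.
by rewrite geq_max => /andP[Mi Ni]; split; [apply: P_after | apply: Q_after].
Qed.

Lemma eventually_in_mono (I P Q : nat -> Prop) :
  eventually_in I P -> (forall i, I i -> P i -> Q i) -> eventually_in I Q.
Proof. by move=> [N P_after] PQ; exists N => i Ii Ni; apply/PQ/P_after. Qed.

Lemma eventually_ln_ge (R : realType) (I : nat -> Prop) (n : nat -> nat)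
    (a : R) :
  (forall M : nat, eventually_in I (fun i => (M <= n i)%N)) ->
  eventually_in I (fun i => a <= ln ((n i)%:R : R)).
Proof.
move=> n_unbounded.
apply: (eventually_in_mono (n_unbounded (Num.bound (expR a)))) => i _ n_ge.
have expR_lt : expR a < (n i)%:R.
  by apply: lt_le_trans (archi_boundP (ltW (expR_gt0 a))) _; rewrite ler_nat.
rewrite -[a]expRK ler_ln ?posrE ?expR_gt0 ?ltW //.
exact: lt_trans (expR_gt0 a) expR_lt.
Qed.

Lemma algC_to_real_DH_ge (R : realType) (gT : finGroupType) (G H : {group gT}) :
  H \subset G ->
  (rankX G H)%:R / #|cosetsX G H|%:R - #|H|%:R^-1 <= algC_to_real R (DH G H).
Proof.
move=> sHG.
pose q : rat := (rankX G H)%:R / #|cosetsX G H|%:R - #|H|%:R^-1.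
have ratr_q (F : numFieldType) :
    ratr q = (rankX G H)%:R / #|cosetsX G H|%:R - #|H|%:R^-1 :> F.
  by rewrite rmorphB /= fmorph_div fmorphV /= !ratr_nat.
by rewrite -ratr_q ratr_le_algC_to_real // ratr_q DH_ge_rank_index.
Qed.

Lemma distinguishable_of_avg_subdegree (R : realType) (I : nat -> Prop)
    (gT : nat -> finGroupType) (G H : forall i, {group gT i}) (c0 : R) :
  (forall i, I i -> H i \subset G i) ->
  (forall M : nat, eventually_in I (fun i => (M <= #|G i|)%N)) ->
  (forall c : R, 0 < c ->
     eventually_in I (fun i => (ln (#|G i|%:R : R)) `^ c <= (#|H i|%:R : R))) ->
  0 < c0 ->
  eventually_in I (fun i =>
    (#|cosetsX (G i) (H i)|%:R : R) / (rankX (G i) (H i))%:R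
      <= (ln (#|G i|%:R : R)) `^ c0) ->
  distinguishable R I G H.
Proof.
move=> sHG G_unbounded H_superpolylog c0_gt0 avg_le.
have c_gt0 : 0 < c0 + 1 by rewrite addr_gt0.
exists (c0 + 1); split => //.
have ln_ge2 := eventually_ln_ge (2 : R) G_unbounded.
apply: (eventually_in_mono (eventually_in_and ln_ge2
          (eventually_in_and avg_le (H_superpolylog _ c_gt0)))).
move=> i Ii [ln_ge2_i [avg_le_i H_large_i]].
apply: le_trans (algC_to_real_DH_ge R (sHG i Ii)).
apply: powRN_le_ratio_sub_inv ln_ge2_i _ _ avg_le_i H_large_i.
  by rewrite ltr0n /cosetsX -/(indexg _ _) indexg_gt0.
by rewrite ltr0n rankX_gt0 ?sHG.
Qed.

Theorem theorem5 (R : realType) (I : nat -> Prop)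
  (gT : nat -> finGroupType) (G H : forall i, {group gT i}) :
  (forall N : nat, exists i, I i /\ (N < i)%N) ->
  (forall i, I i -> (0 < i)%N) ->
  (forall i, I i -> H i \subset G i) ->
  (forall M : nat, eventually_in I (fun i => (M <= #|G i|)%N)) ->
  (forall c : R, 0 < c ->
     eventually_in I (fun i => (ln (#|G i|%:R : R)) `^ c <= (#|H i|%:R : R))) ->
  ((exists c0 : R, 0 < c0 /\
      eventually_in I (fun i =>
        (#|cosetsX (G i) (H i)|%:R : R) / (rankX (G i) (H i))%:R
          <= (ln (#|G i|%:R : R)) `^ c0)) ->
    distinguishable R I G H)
  /\
  ((exists c0 : R, 0 < c0 /\
      eventually_in I (fun i => forall g, g \in G i ->
        ((#|H i : H i :&: (H i :^ g^-1)|)%g%:R : R) <= (ln (#|G i|%:R : R)) `^ c0)) ->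
    distinguishable R I G H).
Proof.
move=> _ _ sHG G_unbounded H_superpolylog; split.
  by move=> [c0 [c0_gt0 avg_le]]; apply: distinguishable_of_avg_subdegree avg_le.
move=> [c0 [c0_gt0 stab_le]].
apply: (distinguishable_of_avg_subdegree (c0 := c0)) => //.
apply: (eventually_in_mono stab_le) => i Ii stab_le_i.
exact: (avg_subdegree_le (sHG i Ii) stab_le_i).
Qed.
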